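(* Let $G$ be a finite simple graph with $\tau(G) > 2\nu(G)$ such that every proper subgraph $H$ of $G$ satisfies $\tau(H) \leq 2\nu(H)$ (a minimal counterexample to Tuza's Conjecture). Then $G$ is robust.
   Context: $\nu(G)$ is the maximum number of pairwise edge-disjoint triangles in $G$; $\tau(G)$ is the minimum size of an edge set $Y$ with $G-Y$ triangle-free. A graph $G$ is robust if for every $v \in V(G)$, every connected component of the induced subgraph $G[N(v)]$ on the neighborhood of $v$ has at least $5$ vertices. *)

(* A finite simple graph G = (V, E) on a finite ambient type T:
   V : {set T} vertices, E : {set {set T}} edges, each edge a 2-subset of V. *)
From mathcomp Require Import all_boot.
Set Implicit Arguments. Unset Strict Implicit. Unset Printing Implicit Defensive.

Section Graphs.
Variable T : finType.

Definition is_graph (V : {set T}) (E : {set {set T}}) : Prop :=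
  forall e, e \in E -> e \subset V /\ #|e| = 2.

Definition triangleb (E : {set {set T}}) (t : {set T}) : bool :=
  (#|t| == 3) &&
  [forall x in t, forall y in t, (x != y) ==> ([set x; y] \in E)].

Definition tri_edges (t : {set T}) : {set {set T}} :=
  [set [set x; y] | x in t, y in t & x != y].

Definition tri_packing (E : {set {set T}}) (P : {set {set T}}) : bool :=
  [forall t in P, triangleb E t] &&
  [forall t1 in P, forall t2 in P,
     (t1 != t2) ==> [disjoint tri_edges t1 & tri_edges t2]].

Definition nu (E : {set {set T}}) : nat :=
  \max_(P : {set {set T}} | tri_packing E P) #|P|.

Definition triangle_free (E : {set {set T}}) : bool :=
  [forall t : {set T}, ~~ triangleb E t].

(* tau(G): minimum size of Y subset of E with G - Y triangle-free
   (Y = E always works, so #|E| is a valid default for the minimum) *)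
Definition tau (E : {set {set T}}) : nat :=
  \big[minn/#|E|]_(Y : {set {set T}} | (Y \subset E) && triangle_free (E :\: Y)) #|Y|.

Definition nbhd (V : {set T}) (E : {set {set T}}) (v : T) : {set T} :=
  [set u in V | [set u; v] \in E].

Definition nbhd_rel (V : {set T}) (E : {set {set T}}) (v : T) : rel T :=
  fun x y => [&& x \in nbhd V E v, y \in nbhd V E v & [set x; y] \in E].

Definition robust (V : {set T}) (E : {set {set T}}) : Prop :=
  forall v, v \in V -> forall u, u \in nbhd V E v ->
    5 <= #|[set w | connect (nbhd_rel V E v) u w]|.

End Graphs.

(* Suppose a component C of G[N(v)] has at most four vertices.  The edges of
   G[C] are then either absent, or contain two disjoint edges e1, e2 (which span
   C), or pairwise intersect, hence form a star or a triangle.  In each case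
   there is a nonempty edge set X, a packing P of triangles whose edges lie in
   X, and a set Y of at most 2|P| edges meeting every triangle that uses an edge
   of X: take X = {vu}, the edges of v + e1 and v + e2, or the edges of v + e
   for an edge e of G[C].  Since tau(G) <= tau(G - X) + |Y| and
   nu(G - X) + |P| <= nu(G), the bound tau <= 2 nu for the proper subgraph
   G - X then holds for G as well. *)

From mathcomp Require Import all_boot zify.
Set Implicit Arguments. Unset Strict Implicit. Unset Printing Implicit Defensive.

Section Triangles.
Variable T : finType.
Implicit Types (x y v : T) (t e f : {set T}) (E X Y P Q : {set {set T}}).

Lemma card2_set2 f x y : #|f| = 2 -> x \in f -> y \in f -> x != y -> f = [set x; y].
Proof.
move=> f2 xf yf xy; apply/esym/eqP.
by rewrite eqEcard subUset !sub1set xf yf cards2 xy f2.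
Qed.

Lemma tri_edgesP t e : reflect (e \subset t /\ #|e| = 2) (e \in tri_edges t).
Proof.
apply: (iffP imset2P) => [[x y xt] | [et /eqP/cards2P [x [y [xy eE]]]]].
  by rewrite inE => /andP [yt xy] {e}->; rewrite subUset !sub1set xt yt cards2 xy.
move: et; rewrite eE subUset !sub1set => /andP [xt yt].
by exists x y; rewrite ?inE ?yt.
Qed.

Lemma tri_edges_pair t x y : x \in t -> y \in t -> x != y -> [set x; y] \in tri_edges t.
Proof. by move=> xt yt xy; apply/tri_edgesP; rewrite subUset !sub1set xt yt cards2 xy. Qed.

Lemma triangleE E t : triangleb E t = (#|t| == 3) && (tri_edges t \subset E).
Proof.
rewrite /triangleb; case: (#|t| == 3) => //=.
apply/forall_inP/subsetP => [tE e /tri_edgesP [] | tE x xt].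
  move=> + /eqP/cards2P [x [y [xy eE]]]; rewrite eE subUset !sub1set => /andP [xt yt].
  by move/forall_inP: (tE x xt) => /(_ y yt) /implyP; apply.
by apply/forall_inP => y yt; apply/implyP => xy; apply/tE/tri_edges_pair.
Qed.

Lemma triangle_edge E t x y :
  triangleb E t -> x \in t -> y \in t -> x != y -> [set x; y] \in E.
Proof.
by rewrite triangleE => /andP [_ /subsetP tE] xt yt xy; apply/tE/tri_edges_pair.
Qed.

Lemma tri_edges_neq0 t : #|t| = 3 -> tri_edges t != set0.
Proof.
move=> t3; have /card_gt1P [x [y [xt yt xy]]] : 1 < #|t| by rewrite t3.
by apply/set0Pn; exists [set x; y]; apply: tri_edges_pair.
Qed.

Lemma tri_edges_disjoint t1 t2 :
  #|t1 :&: t2| <= 1 -> [disjoint tri_edges t1 & tri_edges t2].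
Proof.
move=> t12; rewrite -setI_eq0; apply/set0Pn => -[e].
rewrite inE => /andP [/tri_edgesP [et1 e2] /tri_edgesP [et2 _]].
have : e \subset t1 :&: t2 by rewrite subsetI et1 et2.
by move/subset_leq_card; rewrite e2 leqNgt ltnS t12.
Qed.

Lemma triangle_setU1 E v e : e \in E -> #|e| = 2 -> v \notin e ->
  (forall x, x \in e -> [set v; x] \in E) -> triangleb E (v |: e).
Proof.
move=> eE e2 ve vE; rewrite /triangleb cardsU1 ve e2 /=.
apply/forall_inP => x /setU1P [-> | xe]; apply/forall_inP => y /setU1P [-> | ye];
  apply/implyP => xy.
- by rewrite eqxx in xy.
- exact: vE.
- by rewrite setUC vE.
- by rewrite -(card2_set2 e2 xe ye xy).
Qed.

Lemma tri_edges_setU1P v e f : #|e| = 2 -> v \notin e -> f \in tri_edges (v |: e) ->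
  f = e \/ exists2 x, x \in e & f = [set v; x].
Proof.
move=> e2 ve /tri_edgesP [fve /eqP/cards2P [x [y [xy fxy]]]]; subst f.
move: fve xy; rewrite subUset !sub1set !inE => /andP [/predU1P [-> | xe] /predU1P [-> | ye]] xy.
- by rewrite eqxx in xy.
- by right; exists y.
- by right; exists x; rewrite // setUC.
- by left; rewrite (card2_set2 e2 xe ye xy).
Qed.

Lemma tri_packing0 E : tri_packing E set0.
Proof. by apply/andP; split; apply/forall_inP => t; rewrite inE. Qed.

Lemma tri_packing1 E t : triangleb E t -> tri_packing E [set t].
Proof.
move=> tE; apply/andP; split; apply/forall_inP => s /set1P -> //.
by apply/forall_inP => s' /set1P ->; rewrite eqxx.
Qed.

Lemma tri_packingS E E' P : E \subset E' -> tri_packing E P -> tri_packing E' P.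
Proof.
move=> EE' /andP [/forall_inP PE disj]; apply/andP; split => //.
apply/forall_inP => t /PE.
by rewrite !triangleE => /andP [-> /subset_trans]; apply.
Qed.

Lemma tri_packingU E P Q : tri_packing E P -> tri_packing E Q ->
  (forall s t, s \in P -> t \in Q -> [disjoint tri_edges s & tri_edges t]) ->
  tri_packing E (P :|: Q).
Proof.
move=> /andP [/forall_inP PE /forall_inP Pdisj] /andP [/forall_inP QE /forall_inP Qdisj] PQ.
apply/andP; split; apply/forall_inP => s.
  by case/setUP => [/PE | /QE].
move=> sPQ; apply/forall_inP => t tPQ; apply/implyP => st.
case/setUP: sPQ => sP; case/setUP: tPQ => tQ.
- by move/forall_inP: (Pdisj s sP) => /(_ t tQ) /implyP; apply.
- exact: PQ.
- by rewrite disjoint_sym; apply: PQ.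
- by move/forall_inP: (Qdisj s sP) => /(_ t tQ) /implyP; apply.
Qed.

Lemma leq_card_nu E P : tri_packing E P -> #|P| <= nu E.
Proof. exact: (leq_bigmax_cond (F := fun P => #|P|)). Qed.

Lemma nu_attained E : exists2 P, tri_packing E P & #|P| = nu E.
Proof.
rewrite /nu; elim/big_ind: _ => [| m n [P PE <-] [Q QE <-] | P PE]; last by exists P.
  by exists set0; rewrite ?cards0 ?tri_packing0.
by case: leqP => _; [exists Q | exists P].
Qed.

Lemma tau_leq_card E Y : Y \subset E -> triangle_free (E :\: Y) -> tau E <= #|Y|.
Proof.
(* [#|E|] is not a unit for [minn], so the monoid lemmas of bigop do not apply. *)
move=> YE freeY; rewrite /tau; have := mem_index_enum Y.
elim: (index_enum _) => // Z r IH; rewrite inE big_cons => /predU1P [<- | /IH].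
  by rewrite YE freeY geq_minl.
by case: ifP => // _; apply: leq_trans (geq_minr _ _).
Qed.

Lemma tau_attained E :
  exists Y, [/\ Y \subset E, triangle_free (E :\: Y) & #|Y| = tau E].
Proof.
rewrite /tau; elim/big_ind: _ => [| m n [Y [? ? <-]] [Z [? ? <-]] | Y /andP [YE freeY]].
- exists E; split => //; apply/forallP => t; rewrite setDv triangleE.
  by apply/negP => /andP [/eqP/tri_edges_neq0]; rewrite subset0 => /negPf ->.
- by case: leqP => _; [exists Y | exists Z].
- by exists Y.
Qed.

Definition hits_triangles_at E X Y := forall t e,
  triangleb E t -> e \in X -> e \in tri_edges t -> exists2 f, f \in Y & f \in tri_edges t.

Lemma tau_leq_setD E X Y : Y \subset E -> hits_triangles_at E X Y ->
  tau E <= tau (E :\: X) + #|Y|.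
Proof.
move=> YE hitY; have [Z [ZEX freeZ <-]] := tau_attained (E :\: X).
have ZE : Z \subset E := subset_trans ZEX (subsetDl E X).
apply: leq_trans (_ : #|Z :|: Y| <= _); last by rewrite -cardsUI leq_addr.
apply: tau_leq_card; first by rewrite subUset ZE.
apply/forallP => t; rewrite triangleE; apply/andP => -[t3 tEZY].
have tE : triangleb E t by rewrite triangleE t3 (subset_trans tEZY) ?subsetDl.
case: (boolP [exists e in X, e \in tri_edges t]) => [/exists_inP [e eX et] | noX].
  have [f fY ft] := hitY t e tE eX et.
  by have := subsetP tEZY f ft; rewrite !inE fY orbT.
move/forallP: freeZ => /(_ t); rewrite triangleE t3; apply/negP/negPn.
apply/subsetP => e et; move/subsetP: tEZY => /(_ e et).
rewrite !inE negb_or => /andP [/andP [-> _] ->]; rewrite andbT /=.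
by apply: contra noX => eX; apply/exists_inP; exists e.
Qed.

Lemma nu_setD_add E X P : tri_packing E P -> (forall t, t \in P -> tri_edges t \subset X) ->
  nu (E :\: X) + #|P| <= nu E.
Proof.
move=> PE PX; have [Q QEX <-] := nu_attained (E :\: X).
have QX s e : s \in Q -> e \in tri_edges s -> e \notin X.
  move: QEX => /andP [/forall_inP QEX _] /QEX; rewrite triangleE => /andP [_ /subsetP sEX].
  by move=> /sEX; rewrite inE => /andP [].
have QP s t : s \in Q -> t \in P -> [disjoint tri_edges s & tri_edges t].
  move=> sQ tP; rewrite -setI_eq0; apply/set0Pn => -[e]; rewrite inE => /andP [es et].
  by have := QX s e sQ es; rewrite (subsetP (PX t tP)).
have disjQP : [disjoint Q & P].
  rewrite -setI_eq0; apply/set0Pn => -[t]; rewrite inE => /andP [tQ tP].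
  move: QEX => /andP [/forall_inP /(_ t tQ)]; rewrite triangleE => /andP [/eqP t3 _] _.
  by move: (QP t t tQ tP); rewrite -setI_eq0 setIid (negPf (tri_edges_neq0 t3)).
have := leq_card_nu (tri_packingU (tri_packingS (subsetDl E X) QEX) PE QP).
by move: disjQP; rewrite -setI_eq0 -cardsUI => /eqP ->; rewrite cards0 addn0.
Qed.

Lemma disjoint_set2 x y f : [disjoint [set x; y] & f] = (x \notin f) && (y \notin f).
Proof. by rewrite disjoints_subset subUset !sub1set !inE. Qed.

(* The conclusion covers both shapes of such a family: a star centred at [z],
   or the triangle spanned by [e] and [z]. *)
Lemma intersecting_pairs_star (F : {set {set T}}) e :
  (forall f, f \in F -> #|f| = 2) -> e \in F ->
  (forall f g, f \in F -> g \in F -> ~~ [disjoint f & g]) ->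
  exists2 z, z \in cover F & forall f, f \in F -> f = e \/ z \in f.
Proof.
move=> F2 eF meet; have /eqP/cards2P [a [b [ab eE]]] := F2 e eF.
have coverF f x : f \in F -> x \in f -> x \in cover F by move=> fF xf; apply/bigcupP; exists f.
have [allA | /forall_inPn [f fF af]] := boolP [forall f in F, a \in f].
  exists a; first by apply: (coverF e); rewrite // eE set21.
  by move=> h hF; right; move/forall_inP: allA; apply.
have [allB | /forall_inPn [g gF bg]] := boolP [forall f in F, b \in f].
  exists b; first by apply: (coverF e); rewrite // eE set22.
  by move=> h hF; right; move/forall_inP: allB; apply.
have bf : b \in f by move: (meet e f eF fF); rewrite eE disjoint_set2 negb_and !negbK (negPf af).
have ag : a \in g by move: (meet e g eF gF); rewrite eE disjoint_set2 negb_and !negbK (negPf bg) orbF.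
have /set0Pn [c] : f :&: g != set0 by rewrite setI_eq0; apply: meet.
rewrite inE => /andP [cf cg].
have fE : f = [set b; c] by apply: card2_set2; rewrite ?F2 //; apply: contraNneq bg => ->.
have gE : g = [set a; c] by apply: card2_set2; rewrite ?F2 //; apply: contraNneq af => ->.
exists c; first exact: coverF cf.
move=> h hF; have [ch | ch] := boolP (c \in h); [by right | left].
have bh : b \in h by move: (meet f h fF hF); rewrite fE disjoint_set2 negb_and !negbK (negPf ch) orbF.
have ah : a \in h by move: (meet g h gF hF); rewrite gE disjoint_set2 negb_and !negbK (negPf ch) orbF.
by rewrite eE (card2_set2 (F2 h hF) ah bh ab).
Qed.

End Triangles.

Definition nbhd_component (T : finType) (V : {set T}) (E : {set {set T}}) v u : {set T} :=
  [set w | connect (nbhd_rel V E v) u w].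

Definition induced_edges (T : finType) (E : {set {set T}}) (C : {set T}) : {set {set T}} :=
  [set e in E | e \subset C].

Section MinimalCounterexample.
Variables (T : finType) (V : {set T}) (E : {set {set T}}).
Hypothesis graphG : is_graph V E.

Lemma edge_neq x y : [set x; y] \in E -> x != y.
Proof.
by case: (eqVneq x y) => [-> /graphG [_] | //]; rewrite setUid cards1.
Qed.

Hypothesis tau_gt : 2 * nu E < tau E.
Hypothesis minimal : forall (V' : {set T}) (E' : {set {set T}}),
  V' \subset V -> E' \subset E -> is_graph V' E' -> (V', E') <> (V, E) ->
  tau E' <= 2 * nu E'.

Lemma no_reducible_configuration (X Y P : {set {set T}}) :
  X \subset E -> X != set0 -> Y \subset E -> #|Y| <= 2 * #|P| ->
  tri_packing E P -> (forall t, t \in P -> tri_edges t \subset X) ->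
  hits_triangles_at E X Y -> False.
Proof.
move=> XE /set0Pn [e eX] YE YP PE PX hitY.
have tau_sub : tau (E :\: X) <= 2 * nu (E :\: X).
  apply: minimal => //; first exact: subsetDl.
    by move=> f /setDP [/graphG].
  by case=> EX; move: (subsetP XE e eX); rewrite -EX inE eX.
have := tau_leq_setD YE hitY; have := nu_setD_add PE PX; lia.
Qed.

Variables v u : T.
Hypothesis u_nbhd : u \in nbhd V E v.
Local Notation C := (nbhd_component V E v u).
Local Notation F := (induced_edges E C).

Lemma component_nbhd x : x \in C -> x \in nbhd V E v.
Proof.
have last_nbhd p y : y \in nbhd V E v -> path (nbhd_rel V E v) y p -> last y p \in nbhd V E v.
  by elim: p y => //= z p IH y _ /andP [/and3P [_ zN _]]; apply: IH.
by rewrite inE => /connectP [p up ->]; apply: last_nbhd.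
Qed.

Lemma component_edge x : x \in C -> [set v; x] \in E.
Proof. by move/component_nbhd; rewrite inE setUC => /andP []. Qed.

Lemma mem_component : u \in C.
Proof. by rewrite inE connect0. Qed.

Lemma notin_component : v \notin C.
Proof. by apply/negP => /component_edge /edge_neq; rewrite eqxx. Qed.

Lemma component_closed x y : x \in C -> [set v; y] \in E -> [set x; y] \in E -> y \in C.
Proof.
move=> xC vy xy; have [/subsetP vyV _] := graphG vy.
have yN : y \in nbhd V E v by rewrite inE vyV ?set22 // setUC.
have := xC; rewrite !inE => ux; apply: connect_trans ux (connect1 _).
by rewrite /nbhd_rel component_nbhd ?yN ?xy.
Qed.

Lemma induced_edges_card2 f : f \in F -> #|f| = 2.
Proof. by rewrite inE => /andP [/graphG []]. Qed.

Lemma triangle_component_edge t x : triangleb E t -> v \in t -> x \in t -> x \in C ->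
  exists w, [/\ w \in t, w \in C, w != x & [set x; w] \in F].
Proof.
move=> tE vt xt xC; have vx : v != x by apply: contraTneq xC => <-; apply: notin_component.
have /subsetPn [w wt] : ~~ (t \subset [set v; x]).
  move: tE; rewrite triangleE => /andP [/eqP t3 _].
  by apply/negP => /subset_leq_card; rewrite t3 cards2 vx.
rewrite !inE negb_or => /andP [wv wx].
have xw : [set x; w] \in E by apply: triangle_edge tE xt wt _; rewrite eq_sym.
have wC : w \in C by apply: component_closed xC _ xw; apply: triangle_edge tE vt wt _; rewrite eq_sym.
by exists w; rewrite wt wC wx !inE xw subUset !sub1set xC wC.
Qed.

Lemma induced_edges_neq0 : F != set0.
Proof.
apply/negP => /eqP F0.
apply: (no_reducible_configuration (X := [set [set v; u]]) (Y := set0) (P := set0)).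
- by rewrite sub1set component_edge ?mem_component.
- by apply/set0Pn; exists [set v; u]; rewrite set11.
- exact: sub0set.
- by rewrite cards0.
- exact: tri_packing0.
- by move=> t; rewrite inE.
move=> t e tE /set1P -> /tri_edgesP [+ _]; rewrite subUset !sub1set => /andP [vt ut].
by have [w [_ _ _]] := triangle_component_edge tE vt ut mem_component; rewrite F0 inE.
Qed.

Lemma induced_edges_disjoint_gt4 e1 e2 :
  e1 \in F -> e2 \in F -> [disjoint e1 & e2] -> 4 < #|C|.
Proof.
move=> e1F e2F; rewrite -setI_eq0 => /eqP e12; rewrite ltnNge; apply/negP => C4.
have [e1_2 e2_2] := (induced_edges_card2 e1F, induced_edges_card2 e2F).
move: e1F e2F; rewrite !inE => /andP [e1E e1C] /andP [e2E e2C].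
have CE : C = e1 :|: e2.
  apply/eqP; rewrite eq_sym eqEcard subUset e1C e2C /=.
  by have := cardsUI e1 e2; rewrite e12 cards0 e1_2 e2_2 addn0 => ->.
have ve1 : v \notin e1 by apply: contra notin_component => /(subsetP e1C).
have ve2 : v \notin e2 by apply: contra notin_component => /(subsetP e2C).
have t1E := triangle_setU1 e1E e1_2 ve1 (fun x xe => component_edge (subsetP e1C x xe)).
have t2E := triangle_setU1 e2E e2_2 ve2 (fun x xe => component_edge (subsetP e2C x xe)).
have t1_3 : #|v |: e1| = 3 by rewrite cardsU1 ve1 e1_2.
have t12 : #|(v |: e1) :&: (v |: e2)| <= 1 by rewrite -setUIr e12 setU0 cards1.
have t1t2 : v |: e1 != v |: e2.
  by apply: contraTneq t12 => <-; rewrite setIid t1_3.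
set Y := [set e1; e2] :|: [set [set v; x] | x in e1].
have vY x : x \in e1 -> [set v; x] \in Y by move=> xe1; apply/setUP; right; apply/imsetP; exists x.
apply: (no_reducible_configuration (X := tri_edges (v |: e1) :|: tri_edges (v |: e2))
                                    (Y := Y) (P := [set v |: e1; v |: e2])).
- by move: t1E t2E; rewrite !triangleE subUset => /andP [_ ->] /andP [_ ->].
- have /set0Pn [f ft1] := tri_edges_neq0 t1_3.
  by apply/set0Pn; exists f; rewrite inE ft1.
- rewrite !subUset !sub1set e1E e2E /=; apply/subsetP => _ /imsetP [x xe1 ->].
  exact/component_edge/(subsetP e1C).
- have : #|Y| <= #|[set e1; e2]| + #|[set [set v; x] | x in e1]| by rewrite -cardsUI leq_addr.
  have := leq_imset_card (fun x => [set v; x]) e1; rewrite cards2 (cards2 (v |: e1)) t1t2 e1_2.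
  by case: (e1 != e2); lia.
- apply: tri_packingU (tri_packing1 t1E) (tri_packing1 t2E) _ => s t /set1P -> /set1P ->.
  exact: tri_edges_disjoint.
- by move=> t /set2P [] ->; rewrite ?subsetUl ?subsetUr.
move=> t f tE /setUP [] /tri_edges_setU1P [] // => [-> | [x xe ->] | -> | [x xe ->]] ft.
- by exists e1; rewrite // !inE eqxx.
- by exists [set v; x]; rewrite ?vY.
- by exists e2; rewrite // !inE eqxx orbT.
(* The third vertex of a triangle through [v] and [x \in e2] lies in [C = e1 :|: e2]. *)
move/tri_edgesP: ft => [+ _]; rewrite subUset !sub1set => /andP [vt xt].
have [w [wt + wx _]] := triangle_component_edge tE vt xt (subsetP e2C x xe).
rewrite CE => /setUP [we1 | we2].
  exists [set v; w]; rewrite ?vY //; apply: tri_edges_pair => //.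
  by apply: contraNneq ve1 => ->.
exists e2; first by rewrite !inE eqxx orbT.
have xw : x != w by rewrite eq_sym.
by rewrite (card2_set2 e2_2 xe we2 xw) tri_edges_pair.
Qed.

Lemma induced_edges_not_star e z :
  e \in F -> z \in C -> ~ (forall f, f \in F -> f = e \/ z \in f).
Proof.
move=> eF zC star; have e_2 := induced_edges_card2 eF.
move: (eF); rewrite inE => /andP [eE eC].
have ve : v \notin e by apply: contra notin_component => /(subsetP eC).
have vz : v != z by apply: contraTneq zC => <-; apply: notin_component.
have t0E := triangle_setU1 eE e_2 ve (fun x xe => component_edge (subsetP eC x xe)).
apply: (no_reducible_configuration (X := tri_edges (v |: e)) (Y := [set e; [set v; z]])
                                   (P := [set v |: e])).
- by move: t0E; rewrite triangleE => /andP [].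
- by apply: tri_edges_neq0; rewrite cardsU1 ve e_2.
- by rewrite subUset !sub1set eE component_edge.
- by rewrite cards1 cards2; case: (_ != _).
- exact: tri_packing1.
- by move=> t /set1P ->.
move=> t f tE /tri_edges_setU1P [] // => [-> | [x xe ->]] ft.
  by exists e; rewrite ?set21.
move/tri_edgesP: ft => [+ _]; rewrite subUset !sub1set => /andP [vt xt].
have [w [wt _ wx xwF]] := triangle_component_edge tE vt xt (subsetP eC x xe).
case: (star _ xwF) => [xwe | ].
  by exists e; rewrite ?set21 // -xwe tri_edges_pair // eq_sym.
rewrite !inE => /orP [] /eqP zE; exists [set v; z]; rewrite ?set22 //;
  by apply: tri_edges_pair; rewrite // zE.
Qed.

End MinimalCounterexample.

Theorem lemma2p6 (T : finType) (V : {set T}) (E : {set {set T}})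
  (HG : is_graph V E)
  (Hcex : 2 * nu E < tau E)
  (Hmin : forall (V' : {set T}) (E' : {set {set T}}),
      V' \subset V -> E' \subset E -> is_graph V' E' ->
      (V', E') <> (V, E) -> tau E' <= 2 * nu E') :
  robust V E.
Proof.
move=> v _ u u_nbhd; rewrite leqNgt; apply/negP => small.
pose F := induced_edges E (nbhd_component V E v u).
have /set0Pn [e eF] := induced_edges_neq0 HG Hcex Hmin u_nbhd.
have meet f g : f \in F -> g \in F -> ~~ [disjoint f & g].
  move=> fF gF; apply/negP => /(induced_edges_disjoint_gt4 HG Hcex Hmin u_nbhd fF gF).
  by rewrite ltnNge -ltnS small.
have [z /bigcupP [f fF zf] star] :=
  intersecting_pairs_star (induced_edges_card2 HG (u := u)) eF meet.
have zC : z \in nbhd_component V E v u by move: fF; rewrite inE => /andP [_ /subsetP]; apply.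
exact: (induced_edges_not_star HG Hcex Hmin u_nbhd eF zC star).
Qed.
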